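(* Let $S$ be an atomic base, let $\Gamma = x_1:A_1,\dots,x_n:A_n$ be a context and let $t$ be a term with $tFV(t)\subseteq\{x_1,\dots,x_n\}$. If the term $t$ of $A$ from $\Gamma$ is E-valid (with respect to $S$), then there is a normal proof-term $s$ (with respect to $S$) such that $t\twoheadrightarrow s$ and $\Gamma\vdash s:A$ is derivable in $\mathbf{IL}_{\mathbf{at}}$.
   Context: System $\mathbf{IL}_{\mathbf{at}}$ (atomic second-order intuitionistic propositional logic). Formulas: $A,B ::= X \mid A\to B \mid \forall X.A$, where $X$ ranges over atoms (propositional variables). Terms: $t,s ::= x \mid c^A \mid \lambda x.t \mid ts \mid \Lambda X.t \mid tX$, where $x$ ranges over term-variables, $c^A$ is a term-constant for each formula $A$, and in $tX$ the argument is an atom. Terms and formulas are taken up to $\alpha$-equivalence; $t[x:=s]$, $t[X:=Y]$, $A[X:=B]$ are capture-avoiding substitutions; $t[\vec{t_i}]$ denotes the simultaneous substitution $t[x_1:=t_1,\dots,x_n:=t_n]$. $tFV(t)$ is the set of free term-variables of $t$, $FV(t)$ the set of free term- and propositional variables. A term is closed if it has no free term-variable. A context is a finite set $x_1:A_1,\dots,x_n:A_n$ with distinct term-variables; $PFV(\Gamma)$ is the set of propositional variables free in $A_1,\dots,A_n$. $\Gamma\vdash t:A$ is derivable if generated by: $\Gamma,x:A\vdash x:A$; $\Gamma\vdash c^A:A$; from $\Gamma,x:A\vdash t:B$ infer $\Gamma\vdash\lambda x.t:A\to B$; from $\Gamma\vdash t:A\to B$ and $\Gamma\vdash s:A$ infer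 $\Gamma\vdash ts:B$; from $\Gamma\vdash t:A$ with $X\notin PFV(\Gamma)$ infer $\Gamma\vdash\Lambda X.t:\forall X.A$; from $\Gamma\vdash t:\forall X.A$ infer $\Gamma\vdash tY:A[X:=Y]$ for any atom $Y$. $\beta$-reduction $\to_\beta$: $(\lambda x.t)s\to_\beta t[x:=s]$, $(\Lambda X.t)Y\to_\beta t[X:=Y]$, closed under taking subterms in any position (application function/argument, under $\lambda$ and under $\Lambda$). A term is normal if it contains no redex (left-hand side of these two rules). $\twoheadrightarrow$ is the reflexive-transitive closure of $\to_\beta$. An atomic base $S$ is a set of term-constants $c^X$ for atoms $X$. A proof-term is a term in which no term-constant occurs other than those $c^X\in S$. qE-validity: (1) a closed term $t$ of an atom $X$ is qE-valid iff $t\twoheadrightarrow s$ for some normal $s$ with $\vdash s:X$ derivable; (2) a closed term $t$ of $B\to C$ is qE-valid iff $ts$ of $C$ is qE-valid for every qE-valid closed term $s$ of $B$; (3) a closed term $t$ of $\forall X.A$ is qE-valid iff $tY$ of $A[X:=Y]$ is qE-valid for every atom $Y$; (4) a term $t$ of $A$ from $x_1:A_1,\dots,x_n:A_n$ with $tFV(t)\subseteq\{x_1,\dots,x_n\}$ is qE-valid iff $t[\vec{t_i}]$ of $A$ is qE-valid for all qE-valid closed terms $t_i$ of $A_i$ ($1\le i\le n$). A term is E-valid iff it is a proof-term and qE-valid. *)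

(* System IL_at in de Bruijn representation (terms and
   formulas up to alpha-equivalence). *)
From Stdlib Require Import List Arith.
Import ListNotations.

(** Formulas: atoms are de Bruijn indices; [All A] binds index 0 in [A]. *)
Inductive form : Type :=
| Atom : nat -> form
| Imp  : form -> form -> form
| All  : form -> form.

(** Terms (Curry-style): [Var n] is a de Bruijn term variable, [Cst A] is the
    constant c^A, [Lam] binds term-variable 0, [TLam] binds atom 0,
    [TApp t Y] is t applied to the atom Y. *)
Inductive term : Type :=
| Var  : nat -> term
| Cst  : form -> term
| Lam  : term -> term
| App  : term -> term -> term
| TLam : term -> term
| TApp : term -> nat -> term.

Definition up (f : nat -> nat) : nat -> nat :=
  fun k => match k with 0 => 0 | S k => S (f k) end.

Definition scons (Y : nat) (f : nat -> nat) : nat -> nat :=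
  fun k => match k with 0 => Y | S k => f k end.

Definition inst (Y : nat) : nat -> nat := scons Y (fun k => k).

Fixpoint fren (f : nat -> nat) (A : form) : form :=
  match A with
  | Atom n => Atom (f n)
  | Imp A B => Imp (fren f A) (fren f B)
  | All A => All (fren (up f) A)
  end.

Fixpoint tren (f : nat -> nat) (t : term) : term :=
  match t with
  | Var n => Var n
  | Cst A => Cst (fren f A)
  | Lam t => Lam (tren f t)
  | App t s => App (tren f t) (tren f s)
  | TLam t => TLam (tren (up f) t)
  | TApp t n => TApp (tren f t) (f n)
  end.

Fixpoint vren (f : nat -> nat) (t : term) : term :=
  match t with
  | Var n => Var (f n)
  | Cst A => Cst A
  | Lam t => Lam (vren (up f) t)
  | App t s => App (vren f t) (vren f s)
  | TLam t => TLam (vren f t)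
  | TApp t n => TApp (vren f t) n
  end.

Fixpoint tsub (sigma : nat -> term) (t : term) : term :=
  match t with
  | Var n => sigma n
  | Cst A => Cst A
  | Lam t => Lam (tsub (fun n => match n with
                                 | 0 => Var 0
                                 | S n => vren S (sigma n) end) t)
  | App t s => App (tsub sigma t) (tsub sigma s)
  | TLam t => TLam (tsub (fun n => tren S (sigma n)) t)
  | TApp t n => TApp (tsub sigma t) n
  end.

Definition subst1 (s : term) : nat -> term :=
  fun n => match n with 0 => s | S n => Var n end.

Inductive step : term -> term -> Prop :=
| step_beta : forall t s, step (App (Lam t) s) (tsub (subst1 s) t)
| step_tbeta : forall t Y, step (TApp (TLam t) Y) (tren (inst Y) t)
| step_lam : forall t t', step t t' -> step (Lam t) (Lam t')
| step_appl : forall t t' s, step t t' -> step (App t s) (App t' s)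
| step_appr : forall t s s', step s s' -> step (App t s) (App t s')
| step_tlam : forall t t', step t t' -> step (TLam t) (TLam t')
| step_tapp : forall t t' Y, step t t' -> step (TApp t Y) (TApp t' Y).

Inductive star : term -> term -> Prop :=
| star_refl : forall t, star t t
| star_step : forall t u v, step t u -> star u v -> star t v.

Fixpoint normal (t : term) : Prop :=
  match t with
  | Var _ | Cst _ => True
  | Lam t => normal t
  | App t s => match t with Lam _ => False | _ => True end /\ normal t /\ normal s
  | TLam t => normal t
  | TApp t _ => match t with TLam _ => False | _ => True end /\ normal t
  end.

Fixpoint fvbound (k : nat) (t : term) : Prop :=
  match t with
  | Var n => n < k
  | Cst _ => True
  | Lam t => fvbound (S k) t
  | App t s => fvbound k t /\ fvbound k s
  | TLam t => fvbound k t
  | TApp t _ => fvbound k t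
  end.

Definition closed (t : term) : Prop := fvbound 0 t.

(** Typing. A context is a list of formulas; [Var i] refers to the i-th
    entry. The side condition X \notin PFV(Gamma) of the Lambda-rule is the
    de Bruijn shift of the context. *)
Inductive typed : list form -> term -> form -> Prop :=
| ty_var : forall G n A, nth_error G n = Some A -> typed G (Var n) A
| ty_cst : forall G A, typed G (Cst A) A
| ty_lam : forall G t A B, typed (A :: G) t B -> typed G (Lam t) (Imp A B)
| ty_app : forall G t s A B,
    typed G t (Imp A B) -> typed G s A -> typed G (App t s) B
| ty_tlam : forall G t A,
    typed (map (fren S) G) t A -> typed G (TLam t) (All A)
| ty_tapp : forall G t A Y,
    typed G t (All A) -> typed G (TApp t Y) (fren (inst Y) A).

(** qE-validity of a closed term t of the formula [fren rho A]
    (the renaming rho keeps the recursion structural on A). *)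
Fixpoint qev (A : form) (rho : nat -> nat) (t : term) : Prop :=
  match A with
  | Atom X => closed t /\
      exists s, star t s /\ normal s /\ typed nil s (Atom (rho X))
  | Imp A B => closed t /\ forall s, qev A rho s -> qev B rho (App t s)
  | All A => closed t /\ forall Y, qev A (scons Y rho) (TApp t Y)
  end.

Definition qE_valid_closed (A : form) (t : term) : Prop := qev A (fun k => k) t.

Definition qE_valid (G : list form) (t : term) (A : form) : Prop :=
  fvbound (length G) t /\
  forall sigma : nat -> term,
    (forall i Ai, nth_error G i = Some Ai -> qE_valid_closed Ai (sigma i)) ->
    qE_valid_closed A (tsub sigma t).

(** An atomic base is given by the set of atoms X such that c^X is in it. *)
Definition atomic_base := nat -> Prop.

(** proof-term w.r.t. the base Sb: every constant occurrence (at atom-binder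
    depth d) is c^X for a free atom X with c^X in Sb. *)
Fixpoint proofterm_at (Sb : atomic_base) (d : nat) (t : term) : Prop :=
  match t with
  | Var _ => True
  | Cst A => match A with Atom X => d <= X /\ Sb (X - d) | _ => False end
  | Lam t => proofterm_at Sb d t
  | App t s => proofterm_at Sb d t /\ proofterm_at Sb d s
  | TLam t => proofterm_at Sb (S d) t
  | TApp t _ => proofterm_at Sb d t
  end.

Definition proofterm (Sb : atomic_base) (t : term) : Prop := proofterm_at Sb 0 t.

Definition E_valid (Sb : atomic_base) (G : list form) (t : term) (A : form) : Prop :=
  proofterm Sb t /\ qE_valid G t A.

(* Replace each x_i by the constant c^{A_i}.  By induction on formulas, every
   qE-valid closed term of A reduces to a closed normal term of type A, and
   conversely every closed term reducing to a normal neutral term of type A is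
   qE-valid (at a quantifier one instantiates with an atom fresh for the term
   and the formula, and undoes the instantiation by a renaming afterwards).
   In particular each c^{A_i} is qE-valid, so t[c^{A_i}] has a normal form of
   type A.  A substitution by variables and constants creates no redex, so that
   reduction is the image of a reduction of t, to a normal term typed in the
   context; reduction also preserves proof-terms. *)

From Stdlib Require Import List Arith Lia.
Import ListNotations.

Lemma fren_ext A f g : (forall n, f n = g n) -> fren f A = fren g A.
Proof.
  revert f g; induction A; intros f g H; simpl; f_equal; auto.
  apply IHA; intros [|n]; simpl; auto.
Qed.

Lemma fren_comp A f g : fren f (fren g A) = fren (fun n => f (g n)) A.
Proof.
  revert f g; induction A; intros f g; simpl; f_equal; auto.
  rewrite IHA; apply fren_ext; intros [|n]; reflexivity.
Qed.

Lemma fren_id A f : (forall n, f n = n) -> fren f A = A.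
Proof.
  revert f; induction A; intros f H; simpl; f_equal; auto.
  apply IHA; intros [|n]; simpl; auto.
Qed.

Lemma fren_scons A Y rho :
  fren (scons Y rho) A = fren (inst Y) (fren (up rho) A).
Proof. rewrite fren_comp; apply fren_ext; intros [|n]; reflexivity. Qed.

Lemma tren_ext t f g : (forall n, f n = g n) -> tren f t = tren g t.
Proof.
  revert f g; induction t as [n|C|t IH|t1 IH1 t2 IH2|t IH|t IH Y];
    intros f g H; simpl; f_equal; auto using fren_ext.
  apply IH; intros [|n]; simpl; auto.
Qed.

Lemma tren_comp t f g : tren f (tren g t) = tren (fun n => f (g n)) t.
Proof.
  revert f g; induction t as [n|C|t IH|t1 IH1 t2 IH2|t IH|t IH Y];
    intros f g; simpl; f_equal; auto using fren_comp.
  rewrite IH; apply tren_ext; intros [|n]; reflexivity.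
Qed.

Lemma tren_id t f : (forall n, f n = n) -> tren f t = t.
Proof.
  revert f; induction t as [n|C|t IH|t1 IH1 t2 IH2|t IH|t IH Y];
    intros f H; simpl; f_equal; auto using fren_id.
  apply IH; intros [|n]; simpl; auto.
Qed.

Lemma vren_ext t f g : (forall n, f n = g n) -> vren f t = vren g t.
Proof.
  revert f g; induction t as [n|C|t IH|t1 IH1 t2 IH2|t IH|t IH Y];
    intros f g H; simpl; f_equal; auto.
  apply IH; intros [|n]; simpl; auto.
Qed.

Lemma vren_comp t f g : vren f (vren g t) = vren (fun n => f (g n)) t.
Proof.
  revert f g; induction t as [n|C|t IH|t1 IH1 t2 IH2|t IH|t IH Y];
    intros f g; simpl; f_equal; auto.
  rewrite IH; apply vren_ext; intros [|n]; reflexivity.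
Qed.

Lemma tren_vren t f g : tren f (vren g t) = vren g (tren f t).
Proof.
  revert f g; induction t as [n|C|t IH|t1 IH1 t2 IH2|t IH|t IH Y];
    intros f g; simpl; f_equal; auto.
Qed.

Lemma tsub_ext t s1 s2 : (forall n, s1 n = s2 n) -> tsub s1 t = tsub s2 t.
Proof.
  revert s1 s2; induction t as [n|C|t IH|t1 IH1 t2 IH2|t IH|t IH Y];
    intros s1 s2 H; simpl; f_equal; auto.
  - apply IH; intros [|n]; simpl; rewrite ?H; auto.
  - apply IH; intros n; rewrite H; auto.
Qed.

Lemma tsub_id t sg : (forall n, sg n = Var n) -> tsub sg t = t.
Proof.
  revert sg; induction t as [n|C|t IH|t1 IH1 t2 IH2|t IH|t IH Y];
    intros sg H; simpl; f_equal; auto.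
  - apply IH; intros [|n]; simpl; rewrite ?H; auto.
  - apply IH; intros n; rewrite H; auto.
Qed.

Lemma tren_tsub t f sg :
  tren f (tsub sg t) = tsub (fun n => tren f (sg n)) (tren f t).
Proof.
  revert f sg; induction t as [n|C|t IH|t1 IH1 t2 IH2|t IH|t IH Y];
    intros f sg; simpl; f_equal; auto.
  - rewrite IH; apply tsub_ext; intros [|n]; simpl; auto using tren_vren.
  - rewrite IH; apply tsub_ext; intros n; rewrite !tren_comp.
    apply tren_ext; intros [|m]; reflexivity.
Qed.

Lemma vren_tsub t f sg : vren f (tsub sg t) = tsub (fun n => vren f (sg n)) t.
Proof.
  revert f sg; induction t as [n|C|t IH|t1 IH1 t2 IH2|t IH|t IH Y];
    intros f sg; simpl; f_equal; auto.
  - rewrite IH; apply tsub_ext; intros [|n]; simpl; auto.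
    rewrite !vren_comp; apply vren_ext; intros [|m]; reflexivity.
  - rewrite IH; apply tsub_ext; intros n; symmetry; apply tren_vren.
Qed.

Lemma tsub_vren t f sg : tsub sg (vren f t) = tsub (fun n => sg (f n)) t.
Proof.
  revert f sg; induction t as [n|C|t IH|t1 IH1 t2 IH2|t IH|t IH Y];
    intros f sg; simpl; f_equal; auto.
  - rewrite IH; apply tsub_ext; intros [|n]; simpl; auto.
  - rewrite IH; apply tsub_ext; reflexivity.
Qed.

Lemma tsub_comp t s1 s2 :
  tsub s2 (tsub s1 t) = tsub (fun n => tsub s2 (s1 n)) t.
Proof.
  revert s1 s2; induction t as [n|C|t IH|t1 IH1 t2 IH2|t IH|t IH Y];
    intros s1 s2; simpl; f_equal; auto.
  - rewrite IH; apply tsub_ext; intros [|n]; simpl; auto.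
    rewrite tsub_vren, vren_tsub; apply tsub_ext; reflexivity.
  - rewrite IH; apply tsub_ext; intros n; rewrite tren_tsub; reflexivity.
Qed.

Lemma tsub_subst1_lift b s sg :
  tsub (subst1 (tsub sg s))
       (tsub (fun n => match n with 0 => Var 0 | S n => vren S (sg n) end) b)
  = tsub sg (tsub (subst1 s) b).
Proof.
  rewrite !tsub_comp; apply tsub_ext; intros [|n]; simpl; auto.
  rewrite tsub_vren; apply tsub_id; reflexivity.
Qed.

Lemma tren_inst_tsub_shift b Y sg :
  tren (inst Y) (tsub (fun n => tren S (sg n)) b) = tsub sg (tren (inst Y) b).
Proof.
  rewrite tren_tsub; apply tsub_ext; intros n.
  rewrite tren_comp; apply tren_id; reflexivity.
Qed.

Lemma tren_tsub_subst1 b s f :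
  tren f (tsub (subst1 s) b) = tsub (subst1 (tren f s)) (tren f b).
Proof. rewrite tren_tsub; apply tsub_ext; intros [|n]; reflexivity. Qed.

Lemma tren_tren_inst b Y f :
  tren f (tren (inst Y) b) = tren (inst (f Y)) (tren (up f) b).
Proof. rewrite !tren_comp; apply tren_ext; intros [|n]; reflexivity. Qed.

Lemma star_trans a b c : star a b -> star b c -> star a c.
Proof. induction 1; eauto using star_step. Qed.

Lemma star_cong (F : term -> term) :
  (forall a b, step a b -> step (F a) (F b)) ->
  forall a b, star a b -> star (F a) (F b).
Proof. intros HF a b H; induction H; eauto using star, star_step. Qed.

Lemma star_app_cst_inv t C u :
  star (App t (Cst C)) u ->
  (exists t', star t t' /\ u = App t' (Cst C)) \/
  (exists b, star t (Lam b) /\ star (tsub (subst1 (Cst C)) b) u).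
Proof.
  remember (App t (Cst C)) as x eqn:E; intros H; revert t E.
  induction H as [x|x y u Hxy Hyu IH]; intros t0 E; subst.
  - left; eauto using star.
  - inversion Hxy as [b s| | |t1 t1' s Ht| t1 s s' Hs | |]; subst.
    + right; eauto using star.
    + destruct (IH t1' eq_refl) as [[t' [H1 H2]]|[b [H1 H2]]];
        [left|right]; eauto using star.
    + inversion Hs.
Qed.

Lemma star_tapp_inv t Y u :
  star (TApp t Y) u ->
  (exists t', star t t' /\ u = TApp t' Y) \/
  (exists b, star t (TLam b) /\ star (tren (inst Y) b) u).
Proof.
  remember (TApp t Y) as x eqn:E; intros H; revert t E.
  induction H as [x|x y u Hxy Hyu IH]; intros t0 E; subst.
  - left; eauto using star.
  - inversion Hxy as [| b Z| | | | |t1 t1' Z Ht]; subst.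
    + right; eauto using star.
    + destruct (IH t1' eq_refl) as [[t' [H1 H2]]|[b [H1 H2]]];
        [left|right]; eauto using star.
Qed.

(** * Substitutions and renamings that create no redex *)

Definition inert (sg : nat -> term) : Prop :=
  forall i, (exists j, sg i = Var j) \/ (exists C, sg i = Cst C).

Lemma inert_lift sg :
  inert sg -> inert (fun n => match n with 0 => Var 0 | S n => vren S (sg n) end).
Proof.
  intros H [|i]; [left; eauto|].
  destruct (H i) as [[j E]|[C E]]; rewrite E; simpl; eauto.
Qed.

Lemma inert_tshift sg : inert sg -> inert (fun n => tren S (sg n)).
Proof. intros H i; destruct (H i) as [[j E]|[C E]]; rewrite E; simpl; eauto. Qed.

Lemma step_tsub_inv t sg u :
  inert sg -> step (tsub sg t) u -> exists t', step t t' /\ u = tsub sg t'.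
Proof.
  revert sg u; induction t as [n|C|t IH|t1 IH1 t2 IH2|t IH|t IH Y];
    intros sg u Hi Hs; simpl in Hs.
  - destruct (Hi n) as [[j E]|[C E]]; rewrite E in Hs; inversion Hs.
  - inversion Hs.
  - inversion Hs as [| | t0 t' Ht | | | |]; subst.
    destruct (IH _ _ (inert_lift _ Hi) Ht) as [t'' [H1 ->]].
    exists (Lam t''); split; [constructor|]; auto.
  - remember (App _ _) as x eqn:E in Hs.
    destruct Hs as [b s| | |t t' s Ht|t s s' Ht| |]; try discriminate;
      injection E as E1 E2; subst.
    + destruct t1; simpl in E1; try discriminate.
      * destruct (Hi n) as [[j E]|[C E]]; congruence.
      * injection E1 as ->; exists (tsub (subst1 t2) t1).
        split; [constructor | apply tsub_subst1_lift].
    + destruct (IH1 _ _ Hi Ht) as [t'' [H1 ->]].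
      exists (App t'' t2); split; [constructor|]; auto.
    + destruct (IH2 _ _ Hi Ht) as [t'' [H1 ->]].
      exists (App t1 t''); split; [constructor|]; auto.
  - inversion Hs as [| | | | | t0 t' Ht |]; subst.
    destruct (IH _ _ (inert_tshift _ Hi) Ht) as [t'' [H1 ->]].
    exists (TLam t''); split; [constructor|]; auto.
  - remember (TApp _ _) as x eqn:E in Hs.
    destruct Hs as [|b Z| | | | |t0 t' Z Ht]; try discriminate;
      injection E as E1 E2; subst.
    + destruct t; simpl in E1; try discriminate.
      * destruct (Hi n) as [[j E]|[C E]]; congruence.
      * injection E1 as ->; exists (tren (inst Y) t).
        split; [constructor | apply tren_inst_tsub_shift].
    + destruct (IH _ _ Hi Ht) as [t'' [H1 ->]].
      exists (TApp t'' Y); split; [constructor|]; auto.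
Qed.

Lemma star_tsub_inv t sg u :
  inert sg -> star (tsub sg t) u -> exists t', star t t' /\ u = tsub sg t'.
Proof.
  intros Hi H; remember (tsub sg t) as x eqn:E; revert t E.
  induction H as [x|x y u Hxy Hyu IH]; intros t0 ->.
  - eauto using star.
  - destruct (step_tsub_inv _ _ _ Hi Hxy) as [t1 [H1 ->]].
    destruct (IH t1 eq_refl) as [t2 [H2 ->]]; eauto using star.
Qed.

Lemma step_tren_inv t f u :
  step (tren f t) u -> exists t', step t t' /\ u = tren f t'.
Proof.
  revert f u; induction t as [n|C|t IH|t1 IH1 t2 IH2|t IH|t IH Y];
    intros f u Hs; simpl in Hs.
  - inversion Hs.
  - inversion Hs.
  - inversion Hs as [| | t0 t' Ht | | | |]; subst.
    destruct (IH _ _ Ht) as [t'' [H1 ->]].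
    exists (Lam t''); split; [constructor|]; auto.
  - remember (App _ _) as x eqn:E in Hs.
    destruct Hs as [b s| | |t t' s Ht|t s s' Ht| |]; try discriminate;
      injection E as E1 E2; subst.
    + destruct t1; simpl in E1; try discriminate.
      injection E1 as ->; exists (tsub (subst1 t2) t1).
      split; [constructor | symmetry; apply tren_tsub_subst1].
    + destruct (IH1 _ _ Ht) as [t'' [H1 ->]].
      exists (App t'' t2); split; [constructor|]; auto.
    + destruct (IH2 _ _ Ht) as [t'' [H1 ->]].
      exists (App t1 t''); split; [constructor|]; auto.
  - inversion Hs as [| | | | | t0 t' Ht |]; subst.
    destruct (IH _ _ Ht) as [t'' [H1 ->]].
    exists (TLam t''); split; [constructor|]; auto.
  - remember (TApp _ _) as x eqn:E in Hs.
    destruct Hs as [|b Z| | | | |t0 t' Z Ht]; try discriminate;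
      injection E as E1 E2; subst.
    + destruct t; simpl in E1; try discriminate.
      injection E1 as ->; exists (tren (inst Y) t).
      split; [constructor | symmetry; apply tren_tren_inst].
    + destruct (IH _ _ Ht) as [t'' [H1 ->]].
      exists (TApp t'' Y); split; [constructor|]; auto.
Qed.

Lemma star_tren_inv t f u :
  star (tren f t) u -> exists t', star t t' /\ u = tren f t'.
Proof.
  intros H; remember (tren f t) as x eqn:E; revert t E.
  induction H as [x|x y u Hxy Hyu IH]; intros t0 ->.
  - eauto using star.
  - destruct (step_tren_inv _ _ _ Hxy) as [t1 [H1 ->]].
    destruct (IH t1 eq_refl) as [t2 [H2 ->]]; eauto using star.
Qed.

Lemma normal_tsub_inv t sg : inert sg -> normal (tsub sg t) -> normal t.
Proof.
  revert sg; induction t as [n|C|t IH|t1 IH1 t2 IH2|t IH|t IH Y];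
    intros sg Hi H; simpl in *; auto.
  - exact (IH _ (inert_lift _ Hi) H).
  - destruct H as [H1 [H2 H3]]; split; [|split; eauto].
    destruct t1; simpl in *; auto.
  - exact (IH _ (inert_tshift _ Hi) H).
  - destruct H as [H1 H2]; split; [|eauto].
    destruct t; simpl in *; auto.
Qed.

Lemma normal_tren_inv t f : normal (tren f t) -> normal t.
Proof.
  revert f; induction t as [n|C|t IH|t1 IH1 t2 IH2|t IH|t IH Y];
    intros f H; simpl in *; eauto.
  - destruct H as [H1 [H2 H3]]; split; [|split; eauto].
    destruct t1; simpl in *; auto.
  - destruct H as [H1 H2]; split; [|eauto].
    destruct t; simpl in *; auto.
Qed.

Lemma typed_cst_iff D C B : typed D (Cst C) B <-> B = C.
Proof. split; intros H; [inversion H|subst; constructor]; auto. Qed.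

Lemma typed_var_iff D j B : typed D (Var j) B <-> nth_error D j = Some B.
Proof. split; intros H; [inversion H|constructor]; auto. Qed.

Lemma option_eq_of_some_iff {T : Type} (o1 o2 : option T) :
  (forall x, o1 = Some x <-> o2 = Some x) -> o1 = o2.
Proof.
  intros H; destruct o1 as [x|]; [symmetry; apply H; reflexivity|].
  destruct o2 as [y|]; [apply H; reflexivity|reflexivity].
Qed.

Lemma typed_tsub_inv s D G sg A :
  inert sg ->
  (forall i B, typed D (sg i) B <-> nth_error G i = Some B) ->
  typed D (tsub sg s) A -> typed G s A.
Proof.
  revert D G sg A; induction s; intros D G sg T Hi Hg H; simpl in H.
  - constructor; apply Hg; auto.
  - inversion H; subst; constructor.
  - inversion H; subst; constructor.
    eapply IHs; [apply inert_lift; eauto| |eauto].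
    intros [|i] B0; simpl.
    + rewrite typed_var_iff; simpl; tauto.
    + rewrite <- Hg; destruct (Hi i) as [[j E]|[C E]]; rewrite E; simpl.
      * rewrite !typed_var_iff; simpl; tauto.
      * rewrite !typed_cst_iff; tauto.
  - inversion H; subst; econstructor; eauto.
  - inversion H; subst; constructor.
    eapply IHs; [apply inert_tshift; eauto| |eauto].
    intros i B0; rewrite nth_error_map.
    destruct (Hi i) as [[j E]|[C E]]; rewrite E; simpl.
    + rewrite typed_var_iff, nth_error_map.
      assert (Ej : nth_error D j = nth_error G i).
      { apply option_eq_of_some_iff; intros B.
        rewrite <- Hg, E; symmetry; apply typed_var_iff. }
      rewrite Ej; tauto.
    + rewrite typed_cst_iff.
      specialize (Hg i C); rewrite E, typed_cst_iff in Hg.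
      rewrite (proj1 Hg eq_refl); simpl; split; intros; subst; congruence.
  - inversion H; subst; econstructor; eauto.
Qed.

Lemma typed_tren D t T g :
  typed D t T -> typed (map (fren g) D) (tren g t) (fren g T).
Proof.
  intros H; revert g; induction H; intros g; simpl.
  - constructor; rewrite nth_error_map, H; reflexivity.
  - constructor.
  - constructor; apply IHtyped.
  - econstructor; eauto.
  - constructor; specialize (IHtyped (up g)); rewrite map_map in *.
    erewrite map_ext; [apply IHtyped|].
    intros a; simpl; rewrite !fren_comp; apply fren_ext; reflexivity.
  - rewrite fren_comp, (fren_ext _ _ (fun n => inst (g Y) (up g n)))
      by (intros [|n]; reflexivity).
    rewrite <- fren_comp; constructor; apply IHtyped.
Qed.

Fixpoint form_atoms_lt (k : nat) (A : form) : Prop :=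
  match A with
  | Atom n => n < k
  | Imp A B => form_atoms_lt k A /\ form_atoms_lt k B
  | All A => form_atoms_lt (S k) A
  end.

Fixpoint term_atoms_lt (k : nat) (t : term) : Prop :=
  match t with
  | Var _ => True
  | Cst A => form_atoms_lt k A
  | Lam t => term_atoms_lt k t
  | App t s => term_atoms_lt k t /\ term_atoms_lt k s
  | TLam t => term_atoms_lt (S k) t
  | TApp t n => term_atoms_lt k t /\ n < k
  end.

Lemma form_atoms_lt_fren A k k' f :
  form_atoms_lt k A -> (forall n, n < k -> f n < k') -> form_atoms_lt k' (fren f A).
Proof.
  revert k k' f; induction A; intros k k' f H Hf; simpl in *; intuition eauto.
  eapply IHA; eauto; intros [|n] Hn; simpl; [lia|]; specialize (Hf n); lia.
Qed.

Lemma term_atoms_lt_tren t k k' f :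
  term_atoms_lt k t -> (forall n, n < k -> f n < k') -> term_atoms_lt k' (tren f t).
Proof.
  revert k k' f; induction t as [n|C|t IH|t1 IH1 t2 IH2|t IH|t IH Y];
    intros k k' f H Hf; simpl in *;
    intuition eauto using form_atoms_lt_fren.
  eapply IH; eauto; intros [|n] Hn; simpl; [lia|]; specialize (Hf n); lia.
Qed.

Lemma term_atoms_lt_vren t k f : term_atoms_lt k t -> term_atoms_lt k (vren f t).
Proof.
  revert k f; induction t as [n|C|t IH|t1 IH1 t2 IH2|t IH|t IH Y];
    intros k f H; simpl in *; intuition eauto.
Qed.

Lemma term_atoms_lt_tsub t k sg :
  term_atoms_lt k t -> (forall n, term_atoms_lt k (sg n)) ->
  term_atoms_lt k (tsub sg t).
Proof.
  revert k sg; induction t as [n|C|t IH|t1 IH1 t2 IH2|t IH|t IH Y];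
    intros k sg H Hs; simpl in *; intuition eauto.
  - apply IH; auto; intros [|n]; simpl; auto using term_atoms_lt_vren.
  - apply IH; auto; intros n; eapply term_atoms_lt_tren; eauto; intros; lia.
Qed.

Lemma term_atoms_lt_step t u k : step t u -> term_atoms_lt k t -> term_atoms_lt k u.
Proof.
  intros H; revert k; induction H; intros k Hk; simpl in *; intuition eauto.
  - apply term_atoms_lt_tsub; auto; intros [|n]; simpl; auto.
  - eapply term_atoms_lt_tren; eauto; intros [|n] Hn; simpl; lia.
Qed.

Lemma term_atoms_lt_star t u k : star t u -> term_atoms_lt k t -> term_atoms_lt k u.
Proof. induction 1; eauto using term_atoms_lt_step. Qed.

Lemma form_atoms_lt_mono A k k' : form_atoms_lt k A -> k <= k' -> form_atoms_lt k' A.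
Proof.
  revert k k'; induction A; intros k k' H Hk; simpl in *; intuition eauto.
  - lia.
  - eapply IHA; eauto; lia.
Qed.

Lemma term_atoms_lt_mono t k k' : term_atoms_lt k t -> k <= k' -> term_atoms_lt k' t.
Proof.
  revert k k'; induction t as [n|C|t IH|t1 IH1 t2 IH2|t IH|t IH Y];
    intros k k' H Hk; simpl in *;
    intuition eauto using form_atoms_lt_mono.
  - eapply IH; eauto; lia.
  - lia.
Qed.

Lemma form_atoms_lt_exists A : exists k, form_atoms_lt k A.
Proof.
  induction A as [n|A [k1 H1] B [k2 H2]|A [k H]]; simpl.
  - exists (S n); lia.
  - exists (max k1 k2); split; eapply form_atoms_lt_mono; eauto; lia.
  - exists k; eapply form_atoms_lt_mono; eauto.
Qed.

Lemma term_atoms_lt_exists t : exists k, term_atoms_lt k t.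
Proof.
  induction t as [n|A|t IH|t1 [k1 H1] t2 [k2 H2]|t [k H]|t [k H] n]; simpl; auto.
  - exists 0; auto.
  - apply form_atoms_lt_exists.
  - exists (max k1 k2); split; eapply term_atoms_lt_mono; eauto; lia.
  - exists k; eapply term_atoms_lt_mono; eauto.
  - exists (max k (S n)); split; [eapply term_atoms_lt_mono; eauto|]; lia.
Qed.

Lemma fren_ext_lt A k f g :
  form_atoms_lt k A -> (forall n, n < k -> f n = g n) -> fren f A = fren g A.
Proof.
  revert k f g; induction A; intros k f g H Hf; simpl in *; f_equal; intuition eauto.
  eapply IHA; eauto; intros [|n] Hn; simpl; auto; f_equal; apply Hf; lia.
Qed.

Lemma tren_ext_lt t k f g :
  term_atoms_lt k t -> (forall n, n < k -> f n = g n) -> tren f t = tren g t.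
Proof.
  revert k f g; induction t as [n|C|t IH|t1 IH1 t2 IH2|t IH|t IH Y];
    intros k f g H Hf; simpl in *; f_equal;
    intuition eauto using fren_ext_lt.
  eapply IH; eauto; intros [|n] Hn; simpl; auto; f_equal; apply Hf; lia.
Qed.

(** * Instantiating a quantifier with a fresh atom *)

Definition inst_inv (K n : nat) : nat :=
  if n <? K then S n else if n =? K then 0 else n.

Lemma inst_inv_inst K n : n < S K -> inst_inv K (inst K n) = n.
Proof.
  unfold inst_inv; destruct n as [|n]; simpl; intros H.
  - rewrite Nat.ltb_irrefl, Nat.eqb_refl; reflexivity.
  - replace (n <? K) with true by (symmetry; apply Nat.ltb_lt; lia); reflexivity.
Qed.

Lemma fren_inst_inv A K :
  form_atoms_lt (S K) A -> fren (inst_inv K) (fren (inst K) A) = A.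
Proof.
  intros H; rewrite fren_comp, (fren_ext_lt A (S K) _ (fun n => n))
    by auto using inst_inv_inst.
  apply fren_id; reflexivity.
Qed.

Lemma tren_inst_inv t K :
  term_atoms_lt (S K) t -> tren (inst_inv K) (tren (inst K) t) = t.
Proof.
  intros H; rewrite tren_comp, (tren_ext_lt t (S K) _ (fun n => n))
    by auto using inst_inv_inst.
  apply tren_id; reflexivity.
Qed.

Lemma fren_inst_fresh_inj A B K :
  form_atoms_lt (S K) A -> form_atoms_lt (S K) B ->
  fren (inst K) A = fren (inst K) B -> A = B.
Proof.
  intros HA HB E; rewrite <- (fren_inst_inv A K), <- (fren_inst_inv B K), E; auto.
Qed.

Lemma typed_inst_fresh_inv b A K :
  term_atoms_lt (S K) b -> form_atoms_lt (S K) A ->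
  typed nil (tren (inst K) b) (fren (inst K) A) -> typed nil b A.
Proof.
  intros Hb HA H; apply (typed_tren _ _ _ (inst_inv K)) in H.
  rewrite tren_inst_inv, fren_inst_inv in H; auto.
Qed.

Definition neutral (t : term) : Prop :=
  match t with Lam _ | TLam _ => False | _ => True end.

(* A closed normal neutral term is a head constant applied to arguments, so
   its type is built from the constant's type and atoms of the term. *)
Lemma neutral_type_atoms_lt t K T :
  normal t -> neutral t -> term_atoms_lt K t -> typed nil t T -> form_atoms_lt K T.
Proof.
  revert K T; induction t as [n|C|t IH|t1 IH1 t2 IH2|t IH|t IH Y];
    intros K T Hn Hne Hb Ht; simpl in *.
  - inversion Ht as [G n' A' E| | | | |]; subst; destruct n; discriminate.
  - inversion Ht; subst; auto.
  - contradiction.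
  - inversion Ht as [| | |G t1' t2' A' B' H1 H2| |]; subst.
    destruct Hn as [Hn1 [Hn2 Hn3]].
    assert (form_atoms_lt K (Imp A' T)) as [_ HT]; auto.
    apply IH1; try tauto.
    destruct t1; simpl; auto; inversion H1.
  - contradiction.
  - inversion Ht as [| | | | |G t' A' Z H1]; subst; destruct Hn as [Hn1 Hn2].
    assert (HA : form_atoms_lt K (All A')).
    { apply IH; try tauto. destruct t; simpl; auto; inversion H1. }
    simpl in HA; eapply form_atoms_lt_fren; eauto.
    intros [|m] Hm; simpl; lia.
Qed.

Lemma proofterm_at_vren Sb t d f :
  proofterm_at Sb d t -> proofterm_at Sb d (vren f t).
Proof.
  revert d f; induction t as [n|C|t IH|t1 IH1 t2 IH2|t IH|t IH Y];
    intros d f H; simpl in *; intuition eauto.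
Qed.

Lemma proofterm_at_tren Sb t d d' f :
  proofterm_at Sb d t ->
  (forall X, d <= X -> d' <= f X /\ f X - d' = X - d) ->
  proofterm_at Sb d' (tren f t).
Proof.
  revert d d' f; induction t as [n|C|t IH|t1 IH1 t2 IH2|t IH|t IH Y];
    intros d d' f H Hf; simpl in *; intuition eauto.
  - destruct C as [X| |]; try contradiction; simpl.
    destruct H as [H1 H2], (Hf X H1) as [H3 ->]; auto.
  - eapply IH; eauto; intros [|X] HX; simpl; [lia|].
    destruct (Hf X); lia.
Qed.

Lemma proofterm_at_tsub Sb t d sg :
  proofterm_at Sb d t -> (forall n, proofterm_at Sb d (sg n)) ->
  proofterm_at Sb d (tsub sg t).
Proof.
  revert d sg; induction t as [n|C|t IH|t1 IH1 t2 IH2|t IH|t IH Y];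
    intros d sg H Hs; simpl in *; intuition eauto.
  - apply IH; auto; intros [|n]; simpl; auto using proofterm_at_vren.
  - apply IH; auto; intros n; eapply proofterm_at_tren; eauto; intros; lia.
Qed.

Lemma proofterm_at_step Sb t u d :
  step t u -> proofterm_at Sb d t -> proofterm_at Sb d u.
Proof.
  intros H; revert d; induction H; intros d Hd; simpl in *; intuition eauto.
  - apply proofterm_at_tsub; auto; intros [|n]; simpl; auto.
  - eapply proofterm_at_tren; eauto; intros [|X] HX; simpl; lia.
Qed.

Lemma proofterm_at_star Sb t u d :
  star t u -> proofterm_at Sb d t -> proofterm_at Sb d u.
Proof. induction 1; eauto using proofterm_at_step. Qed.

(** * qE-validity and normalization *)

Lemma qev_closed A rho t : qev A rho t -> closed t.
Proof. destruct A; simpl; tauto. Qed.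

Definition reifies (A : form) : Prop :=
  forall rho t, qev A rho t ->
    exists s, star t s /\ normal s /\ typed nil s (fren rho A).

Definition reflects (A : form) : Prop :=
  forall rho t n, closed t -> star t n -> normal n -> neutral n ->
    typed nil n (fren rho A) -> qev A rho t.

Lemma reifies_atom X : reifies (Atom X).
Proof. intros rho t [_ H]; exact H. Qed.

Lemma reflects_atom X : reflects (Atom X).
Proof. intros rho t n Hc Hs Hn _ Ht; split; eauto. Qed.

Lemma qev_cst A rho : reflects A -> qev A rho (Cst (fren rho A)).
Proof.
  intros HA; apply HA with (n := Cst (fren rho A)); repeat constructor.
Qed.

Lemma reflects_imp A B : reifies A -> reflects B -> reflects (Imp A B).
Proof.
  intros HA HB rho t n Hc Hs Hn Hne Ht; split; auto.
  intros s Hqs; destruct (HA rho s Hqs) as [s' [Hss' [Hns' Hts']]].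
  apply HB with (n := App n s').
  - split; [exact Hc | exact (qev_closed _ _ _ Hqs)].
  - apply star_trans with (App n s).
    + apply (star_cong (fun x => App x s)); auto using step_appl.
    + apply (star_cong (App n)); auto using step_appr.
  - split; auto; destruct n; auto.
  - exact I.
  - econstructor; eauto.
Qed.

Lemma reifies_imp A B : reflects A -> reifies B -> reifies (Imp A B).
Proof.
  intros HA HB rho t [_ Ht].
  set (c := Cst (fren rho A)).
  destruct (HB rho _ (Ht c (qev_cst A rho HA))) as [u [Hu [Hnu Htu]]].
  destruct (star_app_cst_inv _ _ _ Hu) as [[t' [Htt' ->]]|[b [Htb Hbu]]].
  - exists t'; destruct Hnu as [_ [Hnt' _]].
    inversion Htu as [| | |G t1 s1 A1 B1 Ht' Hc| |]; subst.
    apply typed_cst_iff in Hc; subst; auto.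
  - assert (Hi : inert (subst1 c))
      by (intros [|i]; [right; exists (fren rho A)|left; exists i]; reflexivity).
    destruct (star_tsub_inv _ _ _ Hi Hbu) as [b' [Hbb' ->]].
    exists (Lam b'); split; [|split].
    + eapply star_trans; [exact Htb|]; apply star_cong; auto using step_lam.
    + exact (normal_tsub_inv _ _ Hi Hnu).
    + cbn [fren]; constructor; apply (typed_tsub_inv _ nil _ _ _ Hi); [|exact Htu].
      intros [|i] B0.
      * unfold subst1, c; rewrite typed_cst_iff; cbn; split; congruence.
      * exact (typed_var_iff [] i B0).
Qed.

Lemma reflects_all A : reflects A -> reflects (All A).
Proof.
  intros HA rho t n Hc Hs Hn Hne Ht; split; auto; intros Y.
  apply HA with (n := TApp n Y).
  - exact Hc.
  - apply (star_cong (fun x => TApp x Y)); auto using step_tapp.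
  - split; auto; destruct n; auto.
  - exact I.
  - rewrite fren_scons; constructor; exact Ht.
Qed.

Lemma reifies_all A : reifies A -> reifies (All A).
Proof.
  intros HA rho t [_ Ht].
  set (A' := fren (up rho) A).
  destruct (term_atoms_lt_exists t) as [K1 HK1].
  destruct (form_atoms_lt_exists (All A')) as [K2 HK2].
  set (K := max K1 K2).  (* an atom fresh for [t] and [A'] *)
  assert (HtK : term_atoms_lt K t) by (eapply term_atoms_lt_mono; eauto; lia).
  assert (HAK : form_atoms_lt (S K) A') by (eapply form_atoms_lt_mono; eauto; simpl; lia).
  destruct (HA (scons K rho) _ (Ht K)) as [u [Hu [Hnu Htu]]].
  rewrite fren_scons in Htu; fold A' in Htu.
  destruct (star_tapp_inv _ _ _ Hu) as [[t' [Htt' ->]]|[b [Htb Hbu]]].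
  - exists t'; destruct Hnu as [Hne Hnt'].
    inversion Htu as [| | | | |G t1 A0 Y Ht' E]; subst.
    assert (HA0 : form_atoms_lt K (All A0)).
    { apply (neutral_type_atoms_lt t'); eauto using term_atoms_lt_star.
      destruct t'; simpl; auto; inversion Ht'. }
    rewrite (fren_inst_fresh_inj A0 A' K) in Ht'; auto.
  - destruct (star_tren_inv _ _ _ Hbu) as [b' [Hbb' ->]].
    assert (Hb' : term_atoms_lt (S K) b').
    { apply (term_atoms_lt_star _ _ _ Hbb').
      exact (term_atoms_lt_star _ _ _ Htb HtK). }
    exists (TLam b'); split; [|split].
    + eapply star_trans; [exact Htb|]; apply star_cong; auto using step_tlam.
    + exact (normal_tren_inv _ _ Hnu).
    + constructor; exact (typed_inst_fresh_inv _ _ _ Hb' HAK Htu).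
Qed.

Lemma qev_reifies_reflects A : reifies A /\ reflects A.
Proof.
  induction A as [X|A [HA1 HA2] B [HB1 HB2]|A [HA1 HA2]].
  - auto using reifies_atom, reflects_atom.
  - auto using reifies_imp, reflects_imp.
  - auto using reifies_all, reflects_all.
Qed.

Definition ctx_constants (G : list form) (i : nat) : term :=
  match nth_error G i with Some B => Cst B | None => Var i end.

Lemma ctx_constants_inert G : inert (ctx_constants G).
Proof. intros i; unfold ctx_constants; destruct (nth_error G i); eauto. Qed.

Lemma typed_ctx_constants G i B :
  typed nil (ctx_constants G i) B <-> nth_error G i = Some B.
Proof.
  unfold ctx_constants; destruct (nth_error G i).
  - rewrite typed_cst_iff; split; congruence.
  - rewrite typed_var_iff; destruct i; simpl; split; discriminate.
Qed.

Lemma ctx_constants_qE_valid G i Ai :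
  nth_error G i = Some Ai -> qE_valid_closed Ai (ctx_constants G i).
Proof.
  intros E; unfold qE_valid_closed, ctx_constants; rewrite E.
  rewrite <- (fren_id Ai (fun k => k)) at 2 by reflexivity.
  apply qev_cst, qev_reifies_reflects.
Qed.

Theorem mainTheorem1 :
  forall (Sb : atomic_base) (G : list form) (t : term) (A : form),
    fvbound (length G) t ->
    E_valid Sb G t A ->
    exists s : term,
      proofterm Sb s /\ normal s /\ star t s /\ typed G s A.
Proof.
  intros Sb G t A _ [Hpt [_ Hq]].
  pose proof (ctx_constants_inert G) as Hi.
  destruct (proj1 (qev_reifies_reflects A) _ _ (Hq _ (ctx_constants_qE_valid G)))
    as [u [Hu [Hnu Htu]]].
  rewrite fren_id in Htu by reflexivity.
  destruct (star_tsub_inv _ _ _ Hi Hu) as [s [Hts ->]].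
  exists s; split; [|split; [|split]].
  - exact (proofterm_at_star _ _ _ _ Hts Hpt).
  - exact (normal_tsub_inv _ _ Hi Hnu).
  - exact Hts.
  - exact (typed_tsub_inv _ _ _ _ _ Hi (typed_ctx_constants G) Htu).
Qed.
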